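(* Let $G$ be a finite solvable group such that every maximal subgroup of $G$ is either $2$-nilpotent or has prime index in $G$. Then ${\bf O}_{2',2,2',2}(G)=G$.
   Context: All groups are finite. A group is $2$-nilpotent if it has a normal Hall $2'$-subgroup. A maximal subgroup means a maximal proper subgroup. For a prime $p$, ${\bf O}_{p'}(G)$ is the largest normal $p'$-subgroup and ${\bf O}_p(G)$ the largest normal $p$-subgroup of $G$; the upper $p'p$-series is defined recursively: ${\bf O}_{p',p}(G)$ is the full preimage in $G$ of ${\bf O}_p(G/{\bf O}_{p'}(G))$, ${\bf O}_{p',p,p'}(G)$ is the full preimage of ${\bf O}_{p'}(G/{\bf O}_{p',p}(G))$, ${\bf O}_{p',p,p',p}(G)$ the full preimage of ${\bf O}_p(G/{\bf O}_{p',p,p'}(G))$, and so on. Here $p=2$. *)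

From mathcomp Require Import all_boot all_fingroup all_solvable.
Set Implicit Arguments. Unset Strict Implicit. Unset Printing Implicit Defensive.
Local Open Scope group_scope.

Definition two_nilpotent (gT : finGroupType) (H : {group gT}) : Prop :=
  exists K : {group gT}, (2^').-Hall(H) K /\ K <| H.

From mathcomp Require Import all_boot all_fingroup all_solvable.
Set Implicit Arguments. Unset Strict Implicit. Unset Printing Implicit Defensive.
Local Open Scope group_scope.

(* Induction on |G|, the hypothesis being inherited by quotients.  Factoring
   out O_2'(G) we may assume O_2'(G) = 1, so that a minimal normal subgroup N is
   an elementary abelian 2-group, and the series is known for G/N.  Let A/N be
   O_2'(G/N) and H a Hall 2'-subgroup of A.  If A = N the series of G/N lifts.
   Otherwise H is not normal in G, and by the Frattini argument G = A N_G(H), so a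
   maximal subgroup M containing N_G(H) supplements N.  If M has a normal Hall
   2'-subgroup K then 1 <= N <= NK <= G is a normal series with 2-, 2'- and
   2-factors.  If |G : M| is prime then N :&: M = 1 forces |N| = |G : M| = 2, so N
   is central, normalises H and lies in M, which is absurd. *)

Section PSeries.
Variable gT : finGroupType.
Implicit Types (pi : nat_pred) (pis : seq nat_pred) (G L Q : {group gT}).

Lemma pseries_rcons_max pis pi G L : L <| G -> pi.-nat #|L : pseries pis G| ->
  L \subset pseries (rcons pis pi) G.
Proof.
move=> nsLG piL; have nsSG := pseries_normal pis G.
have nSL : L \subset 'N(pseries pis G).
  exact: subset_trans (normal_sub nsLG) (normal_norm nsSG).
have sSS : pseries pis G \subset pseries (rcons pis pi) G.
  by rewrite -cats1 pseries_sub_catl.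
rewrite -(quotientSGK nSL sSS) quotient_pseries pcore_max ?quotient_normal //.
by rewrite /pgroup card_quotient.
Qed.

Lemma pseries_rcons_index_pnat pis pi G :
  pi.-nat #|pseries (rcons pis pi) G : pseries pis G|.
Proof.
rewrite -card_quotient ?pseries_norm2 // quotient_pseries.
exact: pcore_pgroup.
Qed.

Lemma pseries_cat_eq pis1 pis2 G :
    pseries pis2 (G / pseries pis1 G) = G / pseries pis1 G ->
  pseries (pis1 ++ pis2) G = G.
Proof.
move=> eqQ; have nsSG := pseries_normal pis1 G.
apply: (quotient_inj _ nsSG); last by rewrite quotient_pseries_cat.
exact: normalS (pseries_sub_catl _ _ _) (pseries_sub _ _) nsSG.
Qed.

(* A normal series Q <= L of G with factors pi, pi', pi lies under the
   upper pi'pi-series term by term. *)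
Lemma pseries_p'pp'p_eq pi G Q L :
    Q <| G -> L <| G -> Q \subset L ->
    pi.-group Q -> pi^'.-nat #|L : Q| -> pi.-nat #|G : L| ->
  pseries [:: pi^'; pi; pi^'; pi] G = G.
Proof.
move=> nsQG nsLG sQL piQ pi'LQ piGL.
have sQ := pseries_rcons_max (pis := [:: pi^']) nsQG (pnat_dvd (dvdn_indexg _ _) piQ).
have sL := pseries_rcons_max (pis := [:: pi^'; pi]) nsLG (pnat_dvd (indexgS _ sQ) pi'LQ).
apply/eqP; rewrite eqEsubset pseries_sub /=.
exact: pseries_rcons_max (normal_refl G) (pnat_dvd (indexgS _ sL) piGL).
Qed.

End PSeries.

Section PSeriesLift.
Variable gT : finGroupType.
Implicit Types (pi : nat_pred) (G M N K : {group gT}).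

Lemma pseries_p'pp'p_quotient_eq pi G N :
    N <| G -> pi.-group N -> 'O_pi^'(G / N) = 1 ->
    pseries [:: pi^'; pi; pi^'; pi] (G / N) = G / N ->
  pseries [:: pi^'; pi; pi^'; pi] G = G.
Proof.
move=> nsNG piN O1 eqGN.
pose Q := (coset N @*^-1 pseries [:: pi^'; pi] (G / N))%G.
pose L := (coset N @*^-1 pseries [:: pi^'; pi; pi^'] (G / N))%G.
apply: (pseries_p'pp'p_eq (Q := Q) (L := L)).
- by rewrite -(quotientGK nsNG) cosetpre_normal pseries_normal.
- by rewrite -(quotientGK nsNG) cosetpre_normal pseries_normal.
- by rewrite cosetpreSK (pseries_sub_catl _ [:: pi^']).
- have piQb : pi.-group (pseries [:: pi^'; pi] (G / N)).
    by rewrite pseries_pop2 // pcore_pgroup.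
  rewrite /pgroup card_morphpre ?sub_im_coset // ker_coset pnatM.
  by rewrite [pi.-nat #|N|]piN; exact: piQb.
- rewrite index_morphpre ?sub_im_coset //.
  exact: pseries_rcons_index_pnat [:: pi^'; pi] pi^' (G / N).
rewrite -{1}(quotientGK nsNG) index_morphpre ?sub_im_coset //.
have := pseries_rcons_index_pnat [:: pi^'; pi; pi^'] pi (G / N).
by rewrite -cats1 /= eqGN.
Qed.

(* The normal subgroup N K plays the role of the pi'-layer. *)
Lemma pseries_p'pp'p_supplement_eq pi G N M K :
    N <| G -> pi.-group N -> N * M = G -> pi^'.-Hall(M) K -> K <| M ->
  pseries [:: pi^'; pi; pi^'; pi] G = G.
Proof.
move=> nsNG piN defG hallK nsKM; have [sKM piK pi'MK] := and3P hallK.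
have [sNG nNG] := andP nsNG.
have sMG : M \subset G by rewrite -defG mulG_subr.
have nNK : K \subset 'N(N) := subset_trans (subset_trans sKM sMG) nNG.
have defNK : N <*> K = N * K :> {set gT} := norm_joinEr nNK.
have nsNKG : N <*> K <| G.
  rewrite /normal join_subG sNG (subset_trans sKM sMG) -defG mul_subG //.
    exact: subset_trans (joing_subl N K) (normG _).
  by rewrite normsY ?(normal_norm nsKM) ?(subset_trans sMG nNG).
apply: (pseries_p'pp'p_eq nsNG nsNKG (joing_subl N K) piN).
  by rewrite /= defNK indexMg (pnat_dvd (dvdn_indexg _ _) piK).
have defNKM : N <*> K * M = G.
  apply/eqP; rewrite eqEsubset mul_subG ?(normal_sub nsNKG) //= -{1}defG.
  by rewrite mulgSS ?joing_subl.
rewrite -defNKM indexMg -pnatNK.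
exact: pnat_dvd (indexgS _ (joing_subr N K)) pi'MK.
Qed.

End PSeriesLift.

Section Supplement.
Variable gT : finGroupType.
Implicit Types (pi : nat_pred) (G M N : {group gT}).

Lemma exists_maximal_supplement pi G N :
    solvable G -> 'O_pi^'(G) = 1 -> N <| G -> pi.-group N ->
    'O_pi^'(G / N) != 1 ->
  exists M : {group gT}, [/\ maximal M G, N * M = G & ~~ (N \subset 'C(G))].
Proof.
move=> solG O1 nsNG piN ntON; have [sNG nNG] := andP nsNG.
pose A := (coset N @*^-1 'O_pi^'(G / N))%G.
have nsAG : A <| G by rewrite -(quotientGK nsNG) cosetpre_normal pcore_normal.
have nsNA : N <| A := normal_cosetpre _.
have solA := solvableS (normal_sub nsAG) solG.
have [H hallH] := Hall_exists pi^' solA.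
have hallN : pi.-Hall(A) N.
  rewrite /pHall normal_sub //= piN -card_quotient ?normal_norm //.
  by rewrite cosetpreK; apply: pcore_pgroup.
have defA : N * H = A by apply: sdprodW; apply/(sdprod_normal_p'HallP nsNA hallH).
have frat : A * 'N_G(H) = G := Hall_Frattini_arg solA nsAG hallH.
have sHG : H \subset G := subset_trans (pHall_sub hallH) (normal_sub nsAG).
have ntH : H :!=: 1.
  apply: contraNneq ntON => H1.
  by rewrite -(cosetpreK 'O_pi^'(G / N)) -/(gval A) -defA H1 mulg1 trivg_quotient.
(* Since 'O_pi^'(G) = 1, the nontrivial pi'-group H is not normal in G. *)
have [eqNG | [M maxM sNHM]] := maximal_exists (subsetIl G 'N(H)).
  case/negP: ntH; rewrite -subG1 -O1 pcore_max ?(pHall_pgroup hallH) //.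
  by rewrite /normal sHG -eqNG subsetIr.
have sMG := proper_sub (maxgroupp maxM).
have defG : N * M = G.
  apply/eqP; rewrite eqEsubset mul_subG //= -{1}frat -defA -mulgA mulgSS //.
  by rewrite mul_subG // (subset_trans _ sNHM) // subsetI sHG normG.
exists M; split=> //; apply: contraL (maxgroupp maxM) => cNG.
have sNM : N \subset M.
  apply: subset_trans sNHM; rewrite subsetI sNG cents_norm //.
  exact: subset_trans cNG (centS sHG).
by rewrite -defG mulSGid ?properxx.
Qed.

Lemma minnormal_sol_pgroup pi G N :
  solvable G -> minnormal N G -> N \subset G -> 'O_pi^'(G) = 1 -> pi.-group N.
Proof.
move=> solG minN sNG O1.
have [nNG ntN /is_abelemP[p _ /abelem_pgroup pN]] := minnormal_solvable minN sNG solG.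
have [pi_p | pi'p] := boolP (p \in pi).
  by apply: sub_pgroup pN => q; rewrite inE => /eqP->.
case/negP: ntN; rewrite -subG1 -O1 pcore_max ?/normal ?sNG //.
by apply: sub_pgroup pN => q; rewrite inE => /eqP->.
Qed.

Lemma index_minnormal_abelian_supplement G N M :
  minnormal N G -> abelian N -> M \proper G -> N * M = G -> #|G : M| = #|N|.
Proof.
move=> minN cNN ltMG defG; have sMG := proper_sub ltMG.
have [_ nNG] := andP (mingroupp minN).
have nNMG : G \subset 'N(N :&: M).
  rewrite -{1}defG mul_subG ?(sub_abelian_norm cNN) ?subsetIl //.
  by rewrite normsI ?normG ?(subset_trans sMG nNG).
have tiNM : N :&: M = 1.
  apply/eqP; apply: contraTT ltMG => ntNM.
  have eqNM : (N :&: M)%G :=: N.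
    by apply: (mingroupP minN).2; rewrite ?ntNM ?nNMG ?subsetIl.
  by rewrite -defG mulSGid ?properxx // -eqNM subsetIr.
apply/eqP; rewrite -(eqn_pmul2l (cardG_gt0 M)) Lagrange //.
by rewrite -{1}defG TI_cardMg // mulnC.
Qed.

Lemma normed_card2_cent G N : G \subset 'N(N) -> #|N| = 2 -> N \subset 'C(G).
Proof.
move=> nNG N2; have [z Nz ntz] : exists2 z, z \in N & z != 1.
  by apply/trivgPn; rewrite -cardG_gt1 N2.
have defN : N :=: [set 1; z].
  apply/eqP; rewrite eq_sym eqEcard subUset !sub1set group1 Nz N2 cards2.
  by rewrite eq_sym ntz.
apply/centsP => x; rewrite defN => /set2P[-> g _ | -> g Gg].
  exact: commute_sym (commute1 g).
apply/commgP/conjg_fixP.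
have /set2P[/eqP | //] : z ^ g \in [set 1; z] by rewrite -defN memJ_norm ?(subsetP nNG).
by rewrite conjg_eq1 (negPf ntz).
Qed.

End Supplement.

Definition max_two_nilpotent_or_prime_index (gT : finGroupType) (G : {group gT}) :=
  forall M : {group gT}, maximal M G -> two_nilpotent M \/ prime #|G : M|.

Section Quotient.
Variable gT : finGroupType.
Implicit Types (G M N : {group gT}).

Lemma two_nilpotent_quotient M N :
  M \subset 'N(N) -> two_nilpotent M -> two_nilpotent (M / N)%G.
Proof.
move=> nNM [K [hallK nsKM]]; exists (K / N)%G; split; last exact: quotient_normal.
by rewrite quotient_pHall // (subset_trans (pHall_sub hallK) nNM).
Qed.

Lemma max_two_nilpotent_or_prime_index_quotient G N : N <| G ->
  max_two_nilpotent_or_prime_index G -> max_two_nilpotent_or_prime_index (G / N)%G.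
Proof.
move=> nsNG hypG Mb maxMb; pose M := (coset N @*^-1 Mb)%G.
have nsNM : N <| M := normal_cosetpre Mb.
have defMb : M / N = Mb := cosetpreK Mb.
have maxM : maximal M G by rewrite -(quotient_maximal nsNM nsNG) defMb.
have -> : Mb = (M / N)%G by apply: val_inj.
have [nilM | prM] := hypG M maxM; [left | right].
  exact: two_nilpotent_quotient (normal_norm nsNM) nilM.
rewrite index_quotient_eq ?normal_norm ?(proper_sub (maxgroupp maxM)) //.
exact: subset_trans (subsetIr _ _) (normal_sub nsNM).
Qed.

End Quotient.

Theorem theoremB (gT : finGroupType) (G : {group gT}) :
  solvable G ->
  (forall M : {group gT}, maximal M G -> two_nilpotent M \/ prime #|G : M|) ->
  'O_{2^', 2, 2^', 2}(G) = G.
Proof.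
move: gT G; suff IH n gT (G : {group gT}) : #|G| <= n -> solvable G ->
    max_two_nilpotent_or_prime_index G -> 'O_{2^', 2, 2^', 2}(G) = G.
  by move=> gT G; apply: IH.
elim: n gT G => [|n IHn] gT G leGn solG hypG.
  by rewrite leqNgt cardG_gt0 in leGn.
have IHq (N : {group gT}) : N <| G -> N :!=: 1 -> 'O_{2^', 2, 2^', 2}(G / N) = G / N.
  move=> nsNG ntN; apply: IHn (quotient_sol _ solG) _.
    by rewrite -ltnS (leq_trans (ltn_quotient ntN (normal_sub nsNG))).
  exact: max_two_nilpotent_or_prime_index_quotient.
have [O1 | ntO] := eqVneq 'O_2^'(G) 1; last first.
  apply: (pseries_cat_eq (pis1 := [:: 2^'])); rewrite pseries1.
  by rewrite -(pseries_pop _ (trivg_pcore_quotient 2^' G)) IHq ?pcore_normal.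
have [G1 | ntG] := eqsVneq G 1.
  by apply/eqP; rewrite eqEsubset pseries_sub /= G1 sub1G.
have [N minN sNG] := minnormal_exists ntG (normG G).
have [nNG ntN abN] := minnormal_solvable minN sNG solG.
have nsNG : N <| G by apply/andP.
have pN : 2.-group N := minnormal_sol_pgroup solG minN sNG O1.
have [ON1 | ntON] := eqVneq 'O_2^'(G / N) 1.
  exact: pseries_p'pp'p_quotient_eq nsNG pN ON1 (IHq N nsNG ntN).
have [M [maxM defG ncNG]] := exists_maximal_supplement solG O1 nsNG pN ntON.
have [[K [hallK nsKM]] | prGM] := hypG M maxM.
  exact: pseries_p'pp'p_supplement_eq nsNG pN defG hallK nsKM.
case/negP: ncNG; apply: normed_card2_cent nNG _.
have [p _ /abelem_abelian cNN] := is_abelemP abN.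
rewrite (index_minnormal_abelian_supplement minN cNN (maxgroupp maxM) defG) in prGM.
by apply/eqP; move: pN; rewrite /pgroup pnatE.
Qed.
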